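(* Let $n$ be an odd prime and $g<n$ a positive integer which is a generator of $U(\mathbb Z/n\mathbb Z)$. Let $C=circ(c_1,\dots,c_n)$ be a real circulant matrix with eigenvalues $\lambda_k=\sum_{\ell=1}^{n}c_\ell\,\omega^{(k-1)(\ell-1)}$, $1\le k\le n$, where $\omega=\cos\frac{2\pi}{n}+i\sin\frac{2\pi}{n}$, and let $A=Q_gC$ (a real $g$-circulant matrix). Then the eigenvalues of $A$ are $$\lambda_1,\ \beta^{\frac{1}{n-1}},\ \beta^{\frac{1}{n-1}}\varphi,\ \beta^{\frac{1}{n-1}}\varphi^2,\ \dots,\ \beta^{\frac{1}{n-1}}\varphi^{n-2},$$ where $\varphi=\cos\frac{2\pi}{n-1}+i\sin\frac{2\pi}{n-1}$ and $\beta=\left(|\lambda_2||\lambda_3|\cdots|\lambda_{\frac{n+1}{2}}|\right)^2$.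
   Context: $circ(c_1,\dots,c_n)$ is the circulant matrix whose $(i,j)$ entry is $c_{j-i+1}$ (subscripts mod $n$ in $\{1,\dots,n\}$). $Q_g$ is the $n\times n$ permutation matrix whose $(i,j)$ entry is $1$ if $j\equiv 1+(i-1)g\pmod n$ and $0$ otherwise. A $g$-circulant matrix is one in which each row is the preceding row cyclically shifted $g$ places to the right; $Q_gC$ is the $g$-circulant matrix with the same first row as $C$. *)

From HB Require Import structures.
From mathcomp Require Import all_boot all_order all_algebra all_fingroup all_solvable.
From mathcomp Require Import reals trigo exp.
From mathcomp Require Import complex.
Set Implicit Arguments. Unset Strict Implicit. Unset Printing Implicit Defensive.
Import Order.TTheory GRing.Theory Num.Theory.
Local Open Scope ring_scope.

(* Indices are 0-based: the paper's index i in {1..n} is i-1 : 'I_n here. *)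

(* the element of 'I_n with value k mod n, given any element of 'I_n (so n > 0) *)
Definition ordmod (n : nat) (i : 'I_n) (k : nat) : 'I_n :=
  Ordinal (ltn_pmod k (leq_ltn_trans (leq0n i) (ltn_ord i))).

Definition circ (R : Type) (n : nat) (c : 'I_n -> R) : 'M[R]_n :=
  \matrix_(i < n, j < n) c (ordmod i (j + n - i)%N).

(* Q_g: entry (i,j) = 1 iff j = i*g mod n (0-based form of j = 1+(i-1)g mod n) *)
Definition Qg (R : pzRingType) (n g : nat) : 'M[R]_n :=
  \matrix_(i < n, j < n) (((j : nat) == (i * g) %% n)%N)%:R.

Definition generates_units_mod (n g : nat) : Prop :=
  exists u : {unit 'Z_n}, val u = (g%:R : 'Z_n) /\ generator [set: {unit 'Z_n}] u.

Definition expi (R : realType) (t : R) : R[i] := (cos t +i* sin t)%C.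

Definition circ_eig (R : realType) (n : nat) (c : 'I_n -> R) (k : nat) : R[i] :=
  \sum_(l < n) (c l)%:C%C * expi (2 * pi / n%:R) ^+ (k * l).

(* eigenvalues with multiplicity: the complex characteristic polynomial splits
   with exactly the given roots *)
Definition eigenvalues_are (R : realType) (n : nat) (A : 'M[R]_n) (s : seq R[i]) : Prop :=
  char_poly (map_mx (fun x : R => x%:C%C) A) = \prod_(mu <- s) ('X - mu%:P).

Definition cmod (R : realType) (z : R[i]) : R := ComplexField.Normc.normc z.

From HB Require Import structures.
From mathcomp Require Import all_boot all_order all_algebra all_fingroup all_solvable.
From mathcomp Require Import reals trigo exp.
From mathcomp Require Import complex.
From mathcomp Require Import zify ring lra.
Import Order.TTheory GRing.Theory Num.Theory.
Local Open Scope ring_scope.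

(* Write w = expi (2 pi / n) and v_k = (w ^+ (k * i))_i.  Then circ c v_k = lambda_k v_k and
   Q_g v_k = v_(k g), so A = Q_g C sends v_k to lambda_k v_(k g).  As g generates the units
   mod n, multiplication by g fixes the frequency 0 and permutes the n - 1 others in the
   single cycle 1, g, g^2, ...  In the Vandermonde basis of the v_k ordered along this
   cycle, A becomes the block sum of lambda_0 and a cyclic permutation matrix weighted by
   the remaining lambda_k, whose characteristic polynomial is X^(n-1) - prod_(k <> 0)
   lambda_k.  Since c is real, lambda_(n-k) is the conjugate of lambda_k, so for odd n that
   product is beta; the roots of X^(n-1) - beta are beta^(1/(n-1)) phi^j. *)

Section UnitsGenerator.
Context {n g : nat}.
Hypotheses (n_prime : prime n) (g_gen : generates_units_mod n g).

Let n_gt1 : (1 < n)%N := prime_gt1 n_prime.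

Lemma order_generator_units : exists2 u : {unit 'Z_n},
  (forall k, val (u ^+ k)%g = (g ^ k %% n)%N :> nat) & #[u]%g = n.-1.
Proof.
have [u [uval ugen]] := g_gen; exists u.
  by move=> k; rewrite FinRing.val_unitX uval -natrX val_Zp_nat.
by rewrite orderE -(eqP ugen) card_units_Zp ?prime_gt0 ?totient_prime.
Qed.

Lemma expn_mod_neq0 k : (g ^ k %% n != 0)%N.
Proof.
have [u uval _] := order_generator_units; rewrite -uval.
apply: contraTneq (valP (u ^+ k)%g) => u0.
by have -> : val (u ^+ k)%g = 0 by apply: val_inj.
Qed.

Lemma expn_mod_inj {i j : nat} :
  (i < n.-1)%N -> (j < n.-1)%N -> (g ^ i %% n = g ^ j %% n)%N -> i = j.
Proof.
have [u uval ord_u] := order_generator_units => ilt jlt eq_ij.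
have : (u ^+ i == u ^+ j)%g by apply/eqP/val_inj/val_inj; rewrite /= !uval.
by rewrite eq_expg_mod_order ord_u !modn_small // => /eqP.
Qed.

Lemma expn_pred_mod : (g ^ n.-1 %% n = 1)%N.
Proof.
have [u uval ord_u] := order_generator_units.
by rewrite -uval -ord_u expg_order.
Qed.

Lemma expn_mod_order k : (g ^ k = g ^ (k %% n.-1) %[mod n])%N.
Proof.
rewrite {1}(divn_eq k n.-1) expnD [(_ * n.-1)%N]mulnC expnM -modnMml.
by rewrite -modnXm expn_pred_mod exp1n (modn_small n_gt1) mul1n.
Qed.

Lemma perm_expn_mod : perm_eq [seq g ^ k %% n | k <- iota 0 n.-1]%N (iota 1 n.-1).
Proof.
set s := map _ _.
have uniq_s : uniq s.
  rewrite map_inj_in_uniq ?iota_uniq // => i j; rewrite !mem_iota.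
  by move=> /andP[_ ilt] /andP[_ jlt]; apply: expn_mod_inj.
have sub_s : {subset s <= iota 1 n.-1}.
  move=> _ /mapP[k _ ->].
  have n_gt0 := prime_gt0 n_prime.
  by rewrite mem_iota add1n prednK // lt0n expn_mod_neq0 ltn_mod.
have [|_ eq_s] := uniq_min_size uniq_s sub_s; first by rewrite size_map !size_iota.
exact: uniq_perm (iota_uniq _ _) eq_s.
Qed.

Lemma big_expn_mod (R : Type) (idx : R) (op : Monoid.com_law idx) (F : nat -> R) :
  \big[op/idx]_(k < n.-1) F (g ^ k %% n)%N = \big[op/idx]_(1 <= k < n) F k.
Proof.
rewrite -(big_mkord xpredT (fun k => F (g ^ k %% n)%N)) /index_iota subn0 subn1.
by rewrite -(big_map (fun k => g ^ k %% n)%N xpredT F) (perm_big _ perm_expn_mod).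
Qed.
End UnitsGenerator.

Section Expi.
Variable R : realType.

Lemma expiD (s t : R) : expi (s + t) = expi s * expi t.
Proof.
rewrite /expi cosD sinD; apply/eqP; rewrite eq_complex /=.
by apply/andP; split; apply/eqP; ring.
Qed.

Lemma expiMn (t : R) k : expi (t *+ k) = expi t ^+ k.
Proof.
elim: k => [|k IH]; first by rewrite /expi cos0 sin0.
by rewrite mulrS expiD IH exprS.
Qed.

Lemma expi_mul_conj (t : R) : expi t * (expi t)^*%C = 1.
Proof.
rewrite /expi /=; apply/eqP; rewrite eq_complex /= -(cos2Dsin2 t) !expr2.
by apply/andP; split; apply/eqP; ring.
Qed.

Lemma expi_neq1 (t : R) : 0 < t < pi *+ 2 -> expi t != 1.
Proof.
case/andP=> t_gt0 t_lt2pi; apply/negP => /eqP[cos1 sin0].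
have [t_lt_pi|] := ltrP t pi.
  by move: (sin_gt0_pi (x := t)); rewrite t_gt0 t_lt_pi sin0 ltxx => /(_ isT).
rewrite le_eqVlt => /orP[/eqP t_pi|pi_lt_t].
  by move: cos1; rewrite -t_pi cospi; lra.
have : 0 < t - pi < pi by apply/andP; split; lra.
move/sin_gt0_pi; have := sinDpi (t - pi); rewrite subrK; lra.
Qed.

Lemma prim_root_expi m : (0 < m)%N -> m.-primitive_root (expi (2 * pi / m%:R : R)).
Proof.
move=> m_gt0; apply/andP; split=> //; apply/forallP => i.
have m_pos : (0 : R) < m%:R by rewrite ltr0n.
have m_neq0 : m%:R != 0 :> R by rewrite gt_eqF.
rewrite unity_rootE -expiMn -[_ *+ i.+1]mulr_natr.
have [i_eq|i_neq] := eqVneq i.+1 m.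
  by rewrite i_eq (divfK m_neq0) mulr_natl /expi cos2pi sin2pi !eqxx.
apply/eqP/negbTE/expi_neq1; apply/andP; split.
  by rewrite !mulr_gt0 ?pi_gt0 ?invr_gt0 ?ltr0n.
have i_lt : (i.+1 < m)%N by rewrite ltn_neqAle i_neq ltn_ord.
have -> : 2 * pi / m%:R * i.+1%:R = i.+1%:R / m%:R * pi *+ 2 :> R by ring.
rewrite ltr_pMn2r // gtr_pMl ?pi_gt0 //.
by rewrite ltr_pdivrMr // mul1r ltr_nat.
Qed.
End Expi.

Definition powers_col {T : pzSemiRingType} n (x : T) : 'cV[T]_n := \col_i x ^+ i.

Lemma col_Vandermonde (T : pzRingType) n (a : 'rV[T]_n) m :
  col m (Vandermonde n a) = powers_col n (a 0 m).
Proof. by apply/colP => i; rewrite !mxE. Qed.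

Lemma circ_mul_powers (T : comNzRingType) n (c : 'I_n -> T) (z : T) k :
  z ^+ n = 1 ->
  circ c *m powers_col n (z ^+ k) =
  (\sum_(l < n) c l * z ^+ (k * l)) *: powers_col n (z ^+ k).
Proof.
move=> zn1; apply/colP => i; rewrite !mxE big_distrl /=.
have n_gt0 : (0 < n)%N := leq_ltn_trans (leq0n i) (ltn_ord i).
pose shift (l : 'I_n) : 'I_n := Ordinal (ltn_pmod (l + i) n_gt0).
have shift_inj : injective shift.
  move=> l1 l2 /(congr1 val) /= /eqP.
  by rewrite eqn_modDr !modn_small // => /eqP /val_inj.
rewrite (reindex_inj shift_inj); apply: eq_bigr => l _ /=; rewrite !mxE.
have -> : ordmod i ((l + i) %% n + n - i) = l.
  apply: val_inj => /=; rewrite -addnBA ?(ltnW (ltn_ord i)) // modnDml.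
  by rewrite -addnA subnKC ?(ltnW (ltn_ord i)) // modnDr modn_small.
have zkn : (z ^+ k) ^+ n = 1 by rewrite exprAC zn1 expr1n.
by rewrite (expr_mod _ zkn) exprD -exprM mulrA.
Qed.

Lemma Qg_mul_powers (T : comNzRingType) n g (x : T) :
  x ^+ n = 1 -> Qg T n g *m powers_col n x = powers_col n (x ^+ g).
Proof.
move=> xn1; apply/colP => i.
have n_gt0 : (0 < n)%N := leq_ltn_trans (leq0n i) (ltn_ord i).
rewrite !mxE (bigD1 (Ordinal (ltn_pmod (i * g) n_gt0))) //= big1 => [|j ji].
  by rewrite !mxE eqxx mul1r addr0 (expr_mod _ xn1) -exprM mulnC.
rewrite !mxE; case: eqP => [j_ig|]; last by rewrite mul0r.
by case/eqP: ji; apply: val_inj.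
Qed.

Lemma mulmx_weighted_perm (T : comNzRingType) n (A W : 'M[T]_n)
    (s : 'I_n -> 'I_n) (a : 'I_n -> T) :
  (forall m, A *m col m W = a m *: col (s m) W) ->
  A *m W = W *m \matrix_(p, m) ((p == s m)%:R * a m).
Proof.
move=> AW; apply/matrixP => i m.
have := congr1 (fun v : 'cV_n => v i 0) (AW m).
rewrite colE mulmxA -colE !mxE => ->.
rewrite (bigD1 (s m)) //= big1 => [|p ps]; last by rewrite !mxE (negbTE ps) mul0r mulr0.
by rewrite !mxE eqxx mul1r addr0 mulrC.
Qed.

Lemma char_poly_similar {F : fieldType} {n} {A B W : 'M[F]_n} :
  W \in unitmx -> A *m W = W *m B -> char_poly A = char_poly B.
Proof.
rewrite unitmxE unitfE => detW AW.
pose Wp := map_mx polyC W.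
have : char_poly_mx A *m Wp = Wp *m char_poly_mx B.
  rewrite /char_poly_mx mulmxBl mulmxBr mul_scalar_mx mul_mx_scalar.
  by rewrite -!map_mxM AW.
move/(congr1 determinant); rewrite !det_mulmx /Wp det_map_mx [RHS]mulrC.
by apply: mulIf; rewrite polyC_eq0.
Qed.

Lemma char_poly_col0 (T : comNzRingType) n (B : 'M[T]_n.+1) :
  (forall i, i != 0 -> B i 0 = 0) ->
  char_poly B = ('X - (B 0 0)%:P) * char_poly (row' 0 (col' 0 B)).
Proof.
move=> B0; rewrite /char_poly (expand_det_col _ ord0) (bigD1 ord0) //= big1 => [|i i0].
  by rewrite addr0 !mxE eqxx /cofactor row'_col'_char_poly_mx /= expr0 mul1r.
by rewrite !mxE B0 // (negbTE i0) subr0 mul0r.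
Qed.

Definition cycle_mx {T : pzSemiRingType} {n} (a : 'I_n -> T) : 'M[T]_n :=
  \matrix_(i, j) ((i == ordS j)%:R * a j).

Lemma val_ordS n (j : 'I_n) : ordS j = (if j.+1 == n then 0 else j.+1)%N :> nat.
Proof.
rewrite /=; case: eqP => [->|j_neq]; first exact: modnn.
by rewrite modn_small // ltn_neqAle; apply/andP; split; [apply/eqP|].
Qed.

Lemma eq_ordS n (i j : 'I_n) :
  (i == ordS j) = (i == (if j.+1 == n then 0 else j.+1)%N :> nat).
Proof. by rewrite -val_ordS. Qed.

Section CycleMatrixMinors.
Variables (T : comNzRingType) (n : nat) (a : 'I_n.+2 -> T).
Local Notation M := (cycle_mx a).

Lemma cycle_mx_minor00_char_poly : char_poly (row' 0 (col' 0 M)) = 'X^(n.+1).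
Proof.
have strict_lower : is_trig_mx (row' 0 (col' 0 M)).
  apply/is_trig_mxP => -[i i_lt] -[j j_lt] /= ij; rewrite !mxE eq_ordS !lift0 /=.
  by case: ifP => _; case: eqP => [?|_]; rewrite ?mul0r //; exfalso; lia.
rewrite char_poly_trig // (eq_bigr (fun=> 'X)) ?prodr_const ?card_ord // => -[i i_lt] _.
rewrite !mxE eq_ordS !lift0 /=.
by case: ifP => _; case: eqP => [?|_]; rewrite ?mul0r ?subr0 //; exfalso; lia.
Qed.

Lemma cycle_mx_minor0max_det :
  \det (row' 0 (col' ord_max (char_poly_mx M))) =
  \prod_(j < n.+1) - (a (widen_ord (leqnSn _) j))%:P.
Proof.
rewrite -det_tr det_trig.
  apply: eq_bigr => -[j j_lt] _; rewrite !mxE -!val_eqE /= /bump /=.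
  have -> : (n < j)%N = false by apply/negbTE; rewrite -leqNgt -ltnS.
  rewrite add0n add1n modn_small ?ltnS // eqxx gtn_eqF // mulr0n sub0r mul1r.
  by congr (- (a _)%:P); apply: val_inj; exact: lift_max.
apply/is_trig_mxP => -[i i_lt] -[j j_lt] /= ij; rewrite !mxE -!val_eqE /= /bump /=.
have -> : (n < i)%N = false by apply/negbTE; rewrite -leqNgt -ltnS.
rewrite add0n add1n modn_small ?ltnS // (gtn_eqF (leqW ij)) eqSS (gtn_eqF ij).
by rewrite mulr0n mul0r subr0.
Qed.

End CycleMatrixMinors.

Lemma char_poly_cycle_mx (T : comNzRingType) n (a : 'I_n.+1 -> T) :
  char_poly (cycle_mx a) = 'X^(n.+1) - (\prod_i a i)%:P.
Proof.
case: n a => [|n] a.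
  by rewrite /char_poly det_mx11 !mxE big_ord1 [ordS _]ord1 eqxx expr1 mul1r.
have max_lift : lift ord0 ord_max = ord_max :> 'I_n.+2 by apply: val_inj.
rewrite /char_poly (expand_det_row _ ord0) big_ord_recl big_ord_recr /= max_lift.
rewrite big1 ?add0r => [|j _]; last first.
  rewrite !mxE -!val_eqE /= /bump /= add1n modn_small ?ltnS ?ltn_ord //.
  by rewrite mulr0n mul0r subr0 mul0r.
rewrite !mxE -!val_eqE /= modnn mulr1n mul0r subr0 mulr0n mul1r sub0r /cofactor.
rewrite row'_col'_char_poly_mx -/(char_poly _) cycle_mx_minor00_char_poly.
rewrite cycle_mx_minor0max_det /= !add0n expr0 mul1r -exprS prodrN card_ord signrMK.
by rewrite [in RHS]big_ord_recr /= rmorphM rmorph_prod mulNr mulrC.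
Qed.

Lemma prod_XsubC_scaled_roots (F : fieldType) n (b z : F) : n.-primitive_root z ->
  \prod_(j <- iota 0 n) ('X - (b * z ^+ j)%:P) = 'X^n - (b ^+ n)%:P.
Proof.
move=> z_prim; have n_gt0 := prim_order_gt0 z_prim.
have [->|b_neq0] := eqVneq b 0.
  rewrite expr0n gtn_eqF // subr0 (eq_bigr (fun=> 'X)) => [|j _]; last by rewrite mul0r subr0.
  by rewrite -[n]subn0 -/(index_iota 0 n) prodr_const_nat.
have := all_roots_prod_XsubC (p := 'X^n - (b ^+ n)%:P)
  (rs := [seq b * z ^+ j | j <- iota 0 n]).
rewrite size_XnsubC // size_map size_iota lead_coefXnsubC // scale1r big_map => -> //.
- apply/allP => _ /mapP[j _ ->]; rewrite rootE !hornerE exprMn -exprM mulnC exprM.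
  by rewrite (prim_expr_order z_prim) expr1n mulr1 subrr.
- rewrite uniq_rootsE map_inj_in_uniq ?iota_uniq // => i j.
  rewrite !mem_iota !add0n => /andP[_ i_lt] /andP[_ j_lt] /(mulfI b_neq0) /eqP.
  by rewrite (eq_prim_root_expr z_prim) !modn_small // => /eqP.
Qed.

Lemma big_nat_mirror {R : Type} {idx : R} (op : Monoid.com_law idx) (F : nat -> R) {m h} :
  m = h.*2.+1 ->
  \big[op/idx]_(1 <= k < m) F k =
  \big[op/idx]_(1 <= k < h.+1) op (F k) (F (m - k)%N).
Proof.
move=> ->; rewrite big_split /= (big_cat_nat _ (n := h.+1)) //=; last by lia.
congr (op _ _); rewrite big_nat_rev -{1}[h.+1]add1n big_addn.
have -> : (h.*2.+1 - h = h.+1)%N by lia.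
by apply: eq_big_nat => k /andP[k_ge1 k_lt]; congr F; lia.
Qed.

Lemma circ_eig_conj (R : realType) n (c : 'I_n -> R) k : (0 < n)%N -> (k <= n)%N ->
  circ_eig c (n - k) = (circ_eig c k)^*%C.
Proof.
move=> n_gt0 k_le; have w_prim := prim_root_expi R n n_gt0.
rewrite /circ_eig rmorph_sum; apply: eq_bigr => l _.
rewrite rmorphM; congr (_ * _); first by rewrite /= oppr0.
set w := expi _ in w_prim *.
have w_neq0 : w != 0.
  apply: contra_eq_neq (prim_expr_order w_prim) => ->.
  by rewrite expr0n gtn_eqF // mulr0n eq_sym oner_eq0.
apply: (mulfI (expf_neq0 (k * l) w_neq0)).
rewrite rmorphXn -exprMn expi_mul_conj expr1n -exprD -mulnDl subnKC //.
by rewrite exprM (prim_expr_order w_prim) expr1n.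
Qed.

Lemma mul_conjc_cmod (R : realType) (z : R[i]) : z * z^*%C = ((cmod z) ^+ 2)%:C%C.
Proof.
case: z => a b; rewrite /cmod /= sqr_sqrtr ?addr_ge0 ?sqr_ge0 //.
by apply/eqP; rewrite eq_complex /=; apply/andP; split; apply/eqP; ring.
Qed.

Lemma prod_circ_eig_odd (R : realType) n (c : 'I_n -> R) : odd n ->
  \prod_(1 <= k < n) circ_eig c k =
  ((\prod_(1 <= k < (n.+1)./2) cmod (circ_eig c k)) ^+ 2)%:C%C.
Proof.
move=> n_odd; have n_eq : n = (n./2).*2.+1 by rewrite -[in LHS](odd_double_half n) n_odd.
have -> : (n.+1)./2 = (n./2).+1 by rewrite [in LHS]n_eq -doubleS doubleK.
rewrite (big_nat_mirror _ _ n_eq) -prodrXl rmorph_prod.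
apply: eq_big_nat => k /andP[k_ge1 k_lt].
rewrite circ_eig_conj ?odd_gt0 //; first exact: mul_conjc_cmod.
by rewrite n_eq -addnn; lia.
Qed.

Section GCirculantSpectrum.
Variables (R : realType) (N g : nat) (c : 'I_N.+2 -> R).
Local Notation n := N.+2.
Hypotheses (n_prime : prime n) (g_gen : generates_units_mod n g).
Local Notation w := (expi (2 * pi / n%:R) : R[i]).
Local Notation lambda := (circ_eig c).

Let w_prim : n.-primitive_root w := prim_root_expi R n (ltn0Sn _).

(* The frequencies 0, g^0, g^1, ..., g^(n-2) mod n, indexed by 'I_n; freq_succ follows
   the cycle that multiplication by g induces on them. *)
Definition freq (m : 'I_n) : nat := if unlift ord0 m is Some j then (g ^ j %% n)%N else 0%N.

Definition freq_succ (m : 'I_n) : 'I_n :=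
  if unlift ord0 m is Some j then lift ord0 (ordS j) else ord0.

Lemma freq_lt m : (freq m < n)%N.
Proof. by rewrite /freq; case: unlift => [j|] //; rewrite ltn_mod. Qed.

Lemma freq_inj : injective freq.
Proof.
move=> m1 m2; rewrite /freq.
case: (unliftP ord0 m1) => [j1 ->|->]; case: (unliftP ord0 m2) => [j2 ->|->] //.
- by move/(expn_mod_inj n_prime g_gen (ltn_ord j1) (ltn_ord j2)) => /val_inj ->.
- by move/eqP; rewrite (negbTE (expn_mod_neq0 n_prime g_gen _)).
- by move/esym/eqP; rewrite (negbTE (expn_mod_neq0 n_prime g_gen _)).
Qed.

Lemma expr_freq_mulg m : w ^+ (freq m * g) = w ^+ freq (freq_succ m).
Proof.
rewrite /freq_succ /freq; case: (unliftP ord0 m) => [j _|_]; rewrite ?liftK ?unlift_none //.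
apply/eqP; rewrite (eq_prim_root_expr w_prim) modnMml -expnSr modn_mod.
exact/eqP/(expn_mod_order n_prime g_gen).
Qed.

Definition fourier_mx : 'M[R[i]]_n := Vandermonde n (\row_m w ^+ freq m).

Definition orbit_mx : 'M[R[i]]_n :=
  \matrix_(p, m) ((p == freq_succ m)%:R * lambda (freq m)).

Lemma fourier_mx_unit : fourier_mx \in unitmx.
Proof.
rewrite unitmxE unitfE det_Vandermonde.
apply/prodf_neq0 => i _; apply/prodf_neq0 => j ij.
rewrite !mxE subr_eq0 (eq_prim_root_expr w_prim) !modn_small ?freq_lt //.
by apply: contraTneq ij => /freq_inj ->; rewrite ltnn.
Qed.

Lemma map_gcirc :
  map_mx (fun x => x%:C%C) (Qg R n g *m circ c) = Qg R[i] n g *m circ (fun l => (c l)%:C%C).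
Proof.
by rewrite map_mxM; congr (_ *m _); apply/matrixP => i j; rewrite !mxE ?rmorph_nat.
Qed.

Lemma gcirc_fourier_mx :
  map_mx (fun x => x%:C%C) (Qg R n g *m circ c) *m fourier_mx = fourier_mx *m orbit_mx.
Proof.
rewrite map_gcirc; apply: mulmx_weighted_perm => m.
rewrite !col_Vandermonde !mxE -mulmxA circ_mul_powers ?(prim_expr_order w_prim) //.
rewrite -scalemxAr Qg_mul_powers; last by rewrite exprAC (prim_expr_order w_prim) expr1n.
by rewrite -exprM expr_freq_mulg.
Qed.

Lemma char_poly_orbit_mx : char_poly orbit_mx =
  ('X - (lambda 0)%:P) * ('X^(N.+1) - (\prod_(1 <= k < n) lambda k)%:P).
Proof.
rewrite char_poly_col0 => [|i i_neq0]; last first.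
  by rewrite mxE /freq_succ unlift_none (negbTE i_neq0) mul0r.
have -> : row' 0 (col' 0 orbit_mx) = cycle_mx (fun j => lambda (g ^ j %% n)%N).
  by apply/matrixP => i j; rewrite !mxE /freq_succ /freq !liftK (inj_eq lift_inj).
rewrite char_poly_cycle_mx (big_expn_mod n_prime g_gen) !mxE /freq_succ /freq unlift_none.
by rewrite eqxx mul1r.
Qed.

Lemma char_poly_gcirc : char_poly (map_mx (fun x => x%:C%C) (Qg R n g *m circ c)) =
  ('X - (lambda 0)%:P) * ('X^(N.+1) - (\prod_(1 <= k < n) lambda k)%:P).
Proof. by rewrite (char_poly_similar fourier_mx_unit gcirc_fourier_mx) char_poly_orbit_mx. Qed.

End GCirculantSpectrum.

Theorem mainTheorem6 (R : realType) (n g : nat) (c : 'I_n -> R) :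
  prime n -> odd n -> (0 < g < n)%N -> generates_units_mod n g ->
  let lambda := circ_eig c in
  let beta : R := (\prod_(1 <= k < (n.+1)./2) cmod (lambda k)) ^+ 2 in
  let b : R := beta `^ (n.-1%:R)^-1 in
  let phi : R[i] := expi (2 * pi / n.-1%:R) in
  eigenvalues_are (Qg R n g *m circ c)
    (lambda 0%N :: [seq (b%:C * phi ^+ j)%C | j <- iota 0 n.-1]).
Proof.
(* Only the residue of g matters. *)
move=> n_prime n_odd _ g_gen.
have n_gt1 := prime_gt1 n_prime.
have char_A : char_poly (map_mx (fun x => x%:C%C) (Qg R n g *m circ c)) =
    ('X - (circ_eig c 0)%:P) * ('X^(n.-1) - (\prod_(1 <= k < n) circ_eig c k)%:P).
  case: n c n_prime n_odd g_gen n_gt1 => [|[|N]] // c n_prime _ g_gen _.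
  exact: char_poly_gcirc.
move=> lambda beta b phi.
have b_pow : b ^+ n.-1 = beta.
  rewrite -powR_mulrn ?powR_ge0 // -powRrM mulVf ?powRr1 ?sqr_ge0 //.
  by rewrite pnatr_eq0 -lt0n -ltnS prednK ?prime_gt0.
rewrite /eigenvalues_are char_A big_cons big_map; congr (_ * _).
rewrite prod_XsubC_scaled_roots; last first.
  by apply: prim_root_expi; rewrite -ltnS prednK ?prime_gt0.
by rewrite prod_circ_eig_odd // -rmorphXn b_pow.
Qed.
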